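(* Let $w$ be a Robinsonian graphon satisfying Assumptions (A1)–(A4). Then the Fiedler value $\lambda_2$ of $\mathbb{L}$ does not belong to the range $\mathrm{rg}(d)=\{d(x):x\in[0,1]\}$ of the degree function.
   Context: A graphon is a measurable symmetric function $w:[0,1]^2\to[0,1]$. It is Robinsonian if for all $x,y,z\in[0,1]$: $y<z<x\Rightarrow w(x,y)\le w(x,z)$ and $x<y<z\Rightarrow w(x,y)\ge w(x,z)$. The degree function is $d(x)=\int_0^1 w(x,y)\,dy$. The graphon-Laplacian is $(\mathbb{L}f)(x)=\int_0^1 w(x,y)(f(x)-f(y))\,dy$ on $L^2([0,1])$; its isolated eigenvalues of finite multiplicity are listed increasingly as $0=\lambda_1<\lambda_2<\cdots$, and $\lambda_2$ is the Fiedler value. Assumptions: (A1) there is $K>0$ with $|w(x,y)-w(x',y')|\le K(|x-x'|+|y-y'|)$; (A2) for every $x$, $\partial w(x,y)/\partial x$ exists and is non-zero for almost every $y$; (A3) $d'(x)$ exists for all $x\in[0,1]$ and $\{x: d'(x)=0\}$ is countable; (A4) with $\mathcal{H}=\{f\in L^2([0,1]):\int_0^1 f=0,\ \int_0^1 f^2=1\}$, $\inf_{f\in\mathcal{H}}\langle \mathbb{L}f,f\rangle<\inf_{x\in[0,1]}d(x)$. *)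

From HB Require Import structures.
From mathcomp Require Import all_boot all_order all_algebra.
From mathcomp Require Import all_classical all_reals all_analysis.
Set Implicit Arguments. Unset Strict Implicit. Unset Printing Implicit Defensive.
Import Order.TTheory GRing.Theory Num.Theory.
Import numFieldNormedType.Exports.
Local Open Scope classical_set_scope.
Local Open Scope ring_scope.

Section GraphonDefs.
Variable R : realType.

Definition I01 : set R := `[0, 1]%classic.

Local Notation mu := (@lebesgue_measure R).

(* one-sided-at-the-boundary derivative of f at x, relative to [0,1] *)
Definition deriv01 (f : R -> R) (x l : R) : Prop :=
  (fun t => (f t - f x) / (t - x)) @ within I01 x^' --> l.

Definition graphon (w : R -> R -> R) : Prop :=
  (forall x y, I01 x -> I01 y -> 0 <= w x y <= 1) /\
  (forall x y, I01 x -> I01 y -> w x y = w y x).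

Definition robinsonian (w : R -> R -> R) : Prop :=
  forall x y z, I01 x -> I01 y -> I01 z ->
    (y < z < x -> w x y <= w x z) /\ (x < y < z -> w x z <= w x y).

Definition degree (w : R -> R -> R) (x : R) : R :=
  Rintegral mu I01 (fun y => w x y).

Definition glap (w : R -> R -> R) (f : R -> R) (x : R) : R :=
  Rintegral mu I01 (fun y => w x y * (f x - f y)).

Definition L2 (f : R -> R) : Prop :=
  measurable_fun I01 f /\
  (\int[mu]_(x in I01) ((f x) ^+ 2)%:E < +oo)%E.

Definition aeq (f g : R -> R) : Prop :=
  mu.-negligible [set x | I01 x /\ f x <> g x].

Definition A1 (w : R -> R -> R) : Prop :=
  exists K : R, 0 < K /\ forall x y x' y', I01 x -> I01 y -> I01 x' -> I01 y' ->
    `|w x y - w x' y'| <= K * (`|x - x'| + `|y - y'|).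

Definition A2 (w : R -> R -> R) : Prop :=
  forall x, I01 x ->
    mu.-negligible [set y | I01 y /\
       ~ (exists l, deriv01 (fun t => w t y) x l /\ l <> 0)].

Definition A3 (w : R -> R -> R) : Prop :=
  exists d' : R -> R,
    (forall x, I01 x -> deriv01 (degree w) x (d' x)) /\
    countable [set x | I01 x /\ d' x = 0].

Definition Hset (f : R -> R) : Prop :=
  L2 f /\ Rintegral mu I01 f = 0 /\ Rintegral mu I01 (fun x => f x ^+ 2) = 1.

Definition qform (w : R -> R -> R) (f : R -> R) : R :=
  Rintegral mu I01 (fun x => glap w f x * f x).

(* inf_{f in H} <Lf,f> < inf_{x in [0,1]} d(x) *)
Definition A4 (w : R -> R -> R) : Prop :=
  exists f c, Hset f /\ qform w f < c /\ (forall x, I01 x -> c <= degree w x).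

(* real mu is in the resolvent set of L on L^2([0,1]) : L - mu is bijective *)
Definition resolvent (w : R -> R -> R) (m : R) : Prop :=
  (forall g, L2 g -> exists f, L2 f /\ aeq (fun x => glap w f x - m * f x) g) /\
  (forall f, L2 f -> aeq (fun x => glap w f x - m * f x) (fun=> 0) -> aeq f (fun=> 0)).

Definition eigenfun (w : R -> R -> R) (l : R) (f : R -> R) : Prop :=
  L2 f /\ aeq (glap w f) (fun x => l * f x).

(* isolated eigenvalue of finite multiplicity *)
Definition discrete_eig (w : R -> R -> R) (l : R) : Prop :=
  (exists f, eigenfun w l f /\ ~ aeq f (fun=> 0)) /\
  (exists e : R, 0 < e /\ forall m, 0 < `|m - l| < e -> resolvent w m) /\
  (exists fs : seq (R -> R), (forall i, (i < size fs)%N -> L2 (nth (fun=> 0) fs i)) /\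
     forall f, eigenfun w l f -> exists cs : seq R,
       aeq f (fun x => \sum_(i < size fs) cs`_i * nth (fun=> 0) fs i x)).

(* Fiedler value: second element of the increasing list of isolated
   eigenvalues of finite multiplicity *)
Definition fiedler (w : R -> R -> R) (l : R) : Prop :=
  discrete_eig w l /\
  exists l1, discrete_eig w l1 /\ l1 < l /\
    forall m, discrete_eig w m -> m < l -> m = l1.

End GraphonDefs.

(* The degree d is Lipschitz by (A1), and by (A3) it is constant on no
   interval, so every neighbourhood of a value l = d(x0) contains values d(z)
   != l with z in (0,1). The Fiedler value is isolated, so such d(z) would lie
   in the resolvent set. But d(a) is never in the resolvent set for 0 < a < 1:
   writing L f = d f - W f with W the (Lipschitz) integral operator of w, a
   solution of (L - d(a)) f = 1_(a,1] satisfies f (d - d(a)) = 1_(a,1] + W f.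
   The right-hand side jumps by 1 at a while W f is continuous, so it stays
   away from 0 on one side of a, whereas |d - d(a)| <= D |x - a|; hence
   |f(x)| >= 1 / (4 D |x - a|) there, which is not square integrable. *)

From HB Require Import structures.
From mathcomp Require Import all_boot all_order all_algebra.
From mathcomp Require Import all_classical all_reals all_analysis.
From mathcomp Require Import ring lra measurable_realfun.
Import Order.TTheory GRing.Theory Num.Theory.
Import numFieldNormedType.Exports.
Set Implicit Arguments. Unset Strict Implicit. Unset Printing Implicit Defensive.
Local Open Scope classical_set_scope.
Local Open Scope ring_scope.

Local Notation mu := (@lebesgue_measure _).

Section UnitInterval.
Variable R : realType.
Implicit Types (f g : R -> R) (k x y : R).

Lemma I01_bounds x : I01 x -> 0 <= x <= 1.
Proof. by rewrite /I01 /= in_itv. Qed.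

Lemma I01_itv x : 0 <= x -> x <= 1 -> I01 x.
Proof. by move=> x0 x1; rewrite /I01 /= in_itv /= x0 x1. Qed.

Lemma measurable_I01 : measurable (@I01 R).
Proof. exact: measurable_itv. Qed.

Lemma lebesgue_measure_I01 : mu (@I01 R) = 1%E.
Proof. by rewrite /I01 lebesgue_measure_itv /= lte_fin ltr01 sube0. Qed.

Lemma integral_cst_I01 k : (\int[mu]_(x in @I01 R) k%:E = k%:E)%E.
Proof.
rewrite integral_cst; last exact: measurable_I01.
set m := (X in (_ * X)%E); have -> : m = 1%E by exact: lebesgue_measure_I01.
by rewrite mule1.
Qed.

Lemma integrable_cst_I01 k : mu.-integrable (@I01 R) (EFin \o cst k).
Proof.
apply/integrableP; split; first exact/measurable_EFinP.
by rewrite (eq_integral (cst `|k|%:E)) // integral_cst_I01 ltry.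
Qed.

Lemma integrableB_I01 f g :
  mu.-integrable (@I01 R) (EFin \o f) -> mu.-integrable (@I01 R) (EFin \o g) ->
  mu.-integrable (@I01 R) (EFin \o (fun y => f y - g y)).
Proof.
move=> if_ ig; apply: (eq_integrable _ _ _ _ (integrableB _ if_ ig)).
- exact: measurable_I01.
- by move=> y _ /=; rewrite EFinB.
- exact: measurable_I01.
Qed.

Lemma integrableMr_I01 f k :
  mu.-integrable (@I01 R) (EFin \o f) -> mu.-integrable (@I01 R) (EFin \o (fun y => f y * k)).
Proof.
move=> if_; apply: (eq_integrable _ _ _ _ (integrableZr _ k if_)).
- exact: measurable_I01.
- by move=> y _ /=; rewrite EFinM.
- exact: measurable_I01.
Qed.

Lemma L2_bounded f k : measurable_fun (@I01 R) f ->
  (forall x, I01 x -> `|f x| <= k) -> L2 f.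
Proof.
move=> mf fk; split => //.
apply: (@le_lt_trans _ _ (\int[mu]_(x in @I01 R) (k ^+ 2)%:E)%E).
  apply: ge0_le_integral => //.
  - exact: measurable_I01.
  - by move=> x _; rewrite lee_fin sqr_ge0.
  - by apply/measurable_EFinP; apply: measurable_funM.
  - move=> x Ix; rewrite lee_fin -[f x ^+ 2]real_normK ?num_real //.
    by rewrite lerXn2r ?nnegrE ?(le_trans _ (fk x Ix)).
by rewrite integral_cst_I01 ltry.
Qed.

Lemma L2_cst k : L2 (fun _ : R => k).
Proof. by apply: (@L2_bounded _ `|k|) => //; exact: measurable_cst. Qed.

Lemma L2_integrable f : L2 f -> mu.-integrable (@I01 R) (EFin \o f).
Proof.
move=> [mf hf].
have i2 : mu.-integrable (@I01 R) (EFin \o (fun x => f x ^+ 2)).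
  apply/integrableP; split; first by apply/measurable_EFinP; exact: measurable_funM.
  by under eq_integral do rewrite /= ger0_norm ?sqr_ge0//.
apply: (le_integrable _ _ _ (integrableD _ (integrable_cst_I01 1) i2)).
- exact: measurable_I01.
- exact/measurable_EFinP.
2: exact: measurable_I01.
move=> y _ /=; rewrite lee_fin (le_trans _ (ler_norm _)) //.
rewrite -[f y ^+ 2]real_normK ?num_real //.
have := normr_ge0 (f y); nra.
Qed.

Definition proj01 y : R := if y < 0 then 0 else if 1 < y then 1 else y.

Lemma proj01_I01 y : I01 (proj01 y).
Proof.
rewrite /proj01; case: ltP => y0; last case: ltP => y1; apply: I01_itv; lra.
Qed.

Lemma proj01_id y : I01 y -> proj01 y = y.
Proof. by move=> /I01_bounds/andP[y0 y1]; rewrite /proj01 ltNge y0 /= ltNge y1. Qed.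

Lemma proj01_1lipschitz y z : `|proj01 y - proj01 z| <= `|y - z|.
Proof.
have N1 : y - z <= `|y - z| by exact: ler_norm.
have N2 : - (y - z) <= `|y - z| by rewrite -normrN; exact: ler_norm.
rewrite ler_norml /proj01.
by case: ltP => h1; case: ltP => h2; try case: ltP => h3; try case: ltP => h4;
  apply/andP; split; lra.
Qed.

Lemma lipschitz_continuous g k :
  (forall y z, `|g y - g z| <= k * `|y - z|) -> continuous g.
Proof.
move=> gk y; apply/cvgrPdist_lt => e e0.
have k1 : 0 < `|k| + 1 by rewrite ltr_pwDr ?normr_ge0.
near=> z; apply: le_lt_trans (gk y z) _.
apply: (@le_lt_trans _ _ ((`|k| + 1) * `|y - z|)).
  by rewrite ler_wpM2r // (le_trans (ler_norm _)) // lerDl.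
rewrite -ltr_pdivlMl //; near: z; apply/nbhs_ballP.
exists ((`|k| + 1)^-1 * e); first by rewrite /= mulr_gt0 ?invr_gt0.
by move=> z; rewrite /ball /= mulrC.
Unshelve. all: by end_near.
Qed.

(* A function that is Lipschitz on [0,1] agrees there with the globally
   Lipschitz function [g \o proj01]. *)
Lemma lipschitz_measurable_I01 g k :
  (forall y z, I01 y -> I01 z -> `|g y - g z| <= k * `|y - z|) ->
  0 <= k -> measurable_fun (@I01 R) g.
Proof.
move=> gk k0.
have cg : continuous (g \o proj01).
  apply: (@lipschitz_continuous _ k) => y z /=.
  apply: le_trans (gk _ _ (proj01_I01 y) (proj01_I01 z)) _.
  by rewrite ler_wpM2l // proj01_1lipschitz.
apply: (eq_measurable_fun (g \o proj01)).
  by move=> y /set_mem Iy /=; rewrite proj01_id.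
exact: measurable_funS (continuous_measurable_fun cg).
Qed.

Lemma L2_sqr_integral_ge f (u v B : R) (N : set R) :
  L2 f -> mu.-negligible N -> 0 <= B -> 0 <= u -> u <= v -> v <= 1 ->
  (forall x, u <= x <= v -> ~ N x -> B <= f x ^+ 2) ->
  B * (v - u) <= Rintegral mu (@I01 R) (fun x => f x ^+ 2).
Proof.
move=> [mf hf] [A [mA A0 NA]] B0 u0 uv v1 fB.
have mf2 : measurable_fun (@I01 R) (EFin \o (fun x => f x ^+ 2)).
  by apply/measurable_EFinP; exact: measurable_funM.
have sqr_ge0E x : (0 <= (f x ^+ 2)%:E)%E by rewrite lee_fin sqr_ge0.
have JI : `[u, v] `<=` @I01 R.
  by move=> x; rewrite /= in_itv /= => /andP[? ?]; apply: I01_itv; lra.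
have int_cst : (\int[mu]_(x in `[u, v]) B%:E = (B * (v - u))%:E)%E.
  have muJ : mu `[u, v] = (v - u)%:E.
    rewrite lebesgue_measure_itv /= lte_fin.
    have [_|] := ltP u v; first by rewrite -EFinD.
    move=> vu; have -> : v = u by apply/eqP; rewrite eq_le uv vu.
    by rewrite subrr.
  rewrite integral_cst; last exact: measurable_itv.
  by set m := (X in (_ * X)%E); have -> : m = (v - u)%:E by exact: muJ.
have le_sub : (\int[mu]_(x in `[u, v]) (f x ^+ 2)%:E <=
                \int[mu]_(x in @I01 R) (f x ^+ 2)%:E)%E.
  by apply: ge0_subset_integral => //; exact: measurable_itv.
rewrite /Rintegral -lee_fin fineK; last by rewrite ge0_fin_numE ?integral_ge0.
apply: (le_trans _ le_sub); rewrite -int_cst.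
apply: ae_ge0_le_integral.
- exact: measurable_itv.
- by move=> x _; rewrite lee_fin.
- exact: measurable_cst.
- by move=> x _.
- exact: (measurable_funS measurable_I01 JI mf2).
exists A; split => // x /= hx; apply: NA; apply: contrapT => Nx; apply: hx => /= Jx.
by rewrite lee_fin; apply: fB.
Qed.

Lemma L2_sqr_integral_ge_mul f e (u v c q : R) (N : set R) :
  L2 f -> mu.-negligible N -> 0 <= c -> 0 < q -> 0 <= u -> u <= v -> v <= 1 ->
  (forall x, u <= x <= v -> `|e x| <= q) ->
  (forall x, u <= x <= v -> ~ N x -> c <= `|f x * e x|) ->
  (c / q) ^+ 2 * (v - u) <= Rintegral mu (@I01 R) (fun x => f x ^+ 2).
Proof.
move=> Lf hN c0 q0 u0 uv v1 e_le fe.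
apply: (L2_sqr_integral_ge Lf hN) => // [|x uxv Nx]; first exact: sqr_ge0.
have cq0 : 0 <= c / q by rewrite divr_ge0 // ltW.
rewrite -[f x ^+ 2]real_normK ?num_real // lerXn2r ?nnegrE //.
rewrite ler_pdivrMr //; apply: le_trans (fe x uxv Nx) _.
by rewrite normrM ler_wpM2l ?normr_ge0 ?e_le.
Qed.

Definition step_at (a x : R) : R := if a < x then 1 else 0.

Lemma L2_step_at (a : R) : L2 (step_at a).
Proof.
apply: (@L2_bounded _ 1) => [|x _]; last by rewrite /step_at; case: ltP; rewrite ?normr1 ?normr0.
apply: (eq_measurable_fun (\1_(`]a, +oo[%classic) : R -> R)).
  move=> x _; rewrite /step_at indicE; case: ltP => h.
    by rewrite mem_set //= in_itv /= h.
  by rewrite memNset //= in_itv /= andbT ltNge h.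
exact: (measurable_indic (measurable_itv _)).
Qed.

End UnitInterval.

Definition graphon_op (R : realType) (w : R -> R -> R) (f : R -> R) (x : R) : R :=
  Rintegral mu (@I01 R) (fun y => w x y * f y).

Section GraphonOperator.
Variables (R : realType) (w : R -> R -> R).
Hypotheses (w_graphon : graphon w) (w_A1 : A1 w).
Implicit Types (f : R -> R) (a x y : R).

Lemma measurable_graphon_section x : I01 x -> measurable_fun (@I01 R) (w x).
Proof.
have [K [K0 wK]] := w_A1 => Ix.
apply: (@lipschitz_measurable_I01 _ _ K) => [y z Iy Iz|]; last exact: ltW.
by apply: le_trans (wK _ _ _ _ Ix Iy Ix Iz) _; rewrite subrr normr0 add0r.
Qed.

Lemma integrable_graphon_sectionM x f : I01 x -> L2 f ->
  mu.-integrable (@I01 R) (EFin \o (fun y => w x y * f y)).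
Proof.
move=> Ix Lf; apply: (le_integrable _ _ _ (L2_integrable Lf)).
- exact: measurable_I01.
- apply/measurable_EFinP; apply: measurable_funM; last by case: Lf.
  exact: measurable_graphon_section.
move=> y Iy /=; rewrite lee_fin normrM.
have /andP[w0 w1] := w_graphon.1 x y Ix Iy.
by rewrite ger0_norm // ler_piMl.
Qed.

Lemma degree_graphon_op x : degree w x = graphon_op w (fun=> 1) x.
Proof. by rewrite /degree /graphon_op; under [RHS]eq_Rintegral do rewrite mulr1. Qed.

Lemma glap_graphon_op f x : I01 x -> L2 f ->
  glap w f x = f x * degree w x - graphon_op w f x.
Proof.
move=> Ix Lf.
have iw : mu.-integrable (@I01 R) (EFin \o w x).
  apply: (eq_integrable _ _ _ _ (integrable_graphon_sectionM Ix (L2_cst 1))).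
  - exact: measurable_I01.
  - by move=> y _ /=; rewrite mulr1.
rewrite /glap /graphon_op /degree.
under eq_Rintegral do rewrite mulrBr.
rewrite RintegralB.
- by rewrite RintegralZr ?[_ * f x]mulrC //; exact: measurable_I01.
- exact: measurable_I01.
- exact: integrableMr_I01.
- exact: integrable_graphon_sectionM.
Qed.

Lemma graphon_op_lipschitz f : L2 f -> exists M, 0 < M /\
  forall x a, I01 x -> I01 a ->
    `|graphon_op w f x - graphon_op w f a| <= M * `|x - a|.
Proof.
move=> Lf; have [K [K0 wK]] := w_A1.
have if_ := integrable_norm (L2_integrable Lf).
set N1 := Rintegral mu (@I01 R) (fun y => `|f y|).
have N1_ge0 : 0 <= N1 by apply: Rintegral_ge0 => y _; exact: normr_ge0.
exists (K * N1 + 1); split => [|x a Ix Ia].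
  by rewrite ltr_wpDl ?ltr01 // mulr_ge0 // ltW.
have ix := integrable_graphon_sectionM Ix Lf.
have ia := integrable_graphon_sectionM Ia Lf.
rewrite /graphon_op -RintegralB //; last exact: measurable_I01.
apply: le_trans; first apply: le_normr_Rintegral.
- exact: measurable_I01.
- exact: integrableB_I01.
apply: (@le_trans _ _ (`|x - a| * K * N1)); last first.
  by rewrite -mulrA [X in _ <= X]mulrC ler_wpM2l ?normr_ge0 // lerDl.
rewrite /N1 -RintegralZl; [|exact: measurable_I01|exact: if_].
apply: le_Rintegral.
- exact: measurable_I01.
- exact: integrable_norm (integrableB_I01 ix ia).
- apply: (eq_integrable _ _ _ _ (integrableMr_I01 (`|x - a| * K) if_)).
  + exact: measurable_I01.
  + by move=> y _ /=; rewrite mulrC.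
move=> y Iy /=; rewrite -mulrBl normrM ler_wpM2r ?normr_ge0 //.
apply: le_trans (wK _ _ _ _ Ix Iy Ia Iy) _.
by rewrite subrr normr0 addr0 mulrC.
Qed.

Lemma degree_lipschitz : exists D, 0 < D /\
  forall x a, I01 x -> I01 a -> `|degree w x - degree w a| <= D * `|x - a|.
Proof.
have [D [D0 HD]] := graphon_op_lipschitz (L2_cst 1).
by exists D; split => // x a Ix Ia; rewrite !degree_graphon_op; exact: HD.
Qed.
End GraphonOperator.

Section DegreeSpectrum.
Variable R : realType.

Lemma lipschitz_add_step_at_ge (g : R -> R) (a M t : R) :
  0 <= M -> (forall x, I01 x -> `|g x - g a| <= M * `|x - a|) ->
  0 < t -> t <= (1 - a) / 2 -> t <= a / 2 -> 8 * t * M <= 1 ->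
  exists u, [/\ 0 <= u, u + t <= 1 &
    forall x, u <= x <= u + t ->
      `|x - a| <= 2 * t /\ 1 / 4 <= `|step_at a x + g x|].
Proof.
move=> M0 gM t0 ta1 ta0 tM; set c := g a.
have g_near x : 0 <= x <= 1 -> `|x - a| <= 2 * t -> `|g x - c| <= 1 / 4.
  move=> /andP[x0 x1] xa; apply: le_trans (gM x (I01_itv x0 x1)) _.
  by apply: (@le_trans _ _ (M * (2 * t))); rewrite ?ler_wpM2l //; nra.
have [jump_right|jump_left] : 1 / 2 <= `|1 + c| \/ 1 / 2 <= `|c|.
  have := ler_normB (1 + c) c; rewrite addrK normr1.
  by case: (lerP (1 / 2) `|1 + c|) => ?; [left|right; lra].
- exists (a + t); split; [lra|lra|] => x /andP[x1 x2].
  have xa : `|x - a| <= 2 * t by rewrite ger0_norm; lra.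
  split => //; rewrite /step_at ifT; last lra.
  have : `|g x - c| <= 1 / 4 by apply: g_near => //; apply/andP; split; lra.
  have := ler_normB (1 + g x) (g x - c).
  have -> : 1 + g x - (g x - c) = 1 + c by ring.
  lra.
- exists (a - 2 * t); split; [lra|lra|] => x /andP[x1 x2].
  have xa : `|x - a| <= 2 * t by rewrite ler0_norm; lra.
  split => //; rewrite /step_at ifF ?add0r; last by apply/negbTE; rewrite -leNgt; lra.
  have : `|g x - c| <= 1 / 4 by apply: g_near => //; apply/andP; split; lra.
  have := ler_normB (g x) (g x - c).
  have -> : g x - (g x - c) = c by ring.
  lra.
Qed.

Lemma degree_not_resolvent (w : R -> R -> R) (a : R) :
  graphon w -> A1 w -> 0 < a < 1 -> ~ resolvent w (degree w a).
Proof.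
move=> w_graphon w_A1 /andP[a0 a1] [solve _].
have Ia : I01 a by apply: I01_itv; lra.
have [f [Lf]] := solve _ (L2_step_at a); rewrite /aeq; set N := [set x | _] => N0.
set S := Rintegral mu (@I01 R) (fun x => f x ^+ 2).
have S0 : 0 <= S by apply: Rintegral_ge0 => x _; exact: sqr_ge0.
have [M [M0 WfM]] := graphon_op_lipschitz w_graphon w_A1 Lf.
have [D [D0 dD]] := degree_lipschitz w_graphon w_A1.
have eq_ae x : I01 x -> ~ N x ->
    f x * (degree w x - degree w a) = step_at a x + graphon_op w f x.
  move=> Ix Nx; have <- : glap w f x - degree w a * f x = step_at a x.
    by apply: contrapT => ne; apply: Nx.
  by rewrite glap_graphon_op //; ring.
(* The last bound makes the lower estimate 1 / (64 D^2 t) of [S] exceed [S]. *)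
have : \forall t \near (0 : R)^'+, [/\ 0 < t, t <= (1 - a) / 2, t <= a / 2,
    t <= 1 / (8 * M) & t <= 1 / (64 * D ^+ 2 * (S + 1))].
  near=> t; split; near: t; first exact: nbhs_right_gt.
  - by apply: (nbhs_right_le (z := (1 - a) / 2)); lra.
  - by apply: (nbhs_right_le (z := a / 2)); lra.
  - by apply: (nbhs_right_le (z := 1 / (8 * M))); rewrite divr_gt0 ?mulr_gt0.
  - apply: (nbhs_right_le (z := 1 / (64 * D ^+ 2 * (S + 1)))).
    by rewrite divr_gt0 ?mulr_gt0 ?exprn_gt0 //; lra.
move=> /filter_ex[t [t0 ta1 ta0 tM tS]].
have [u [u0 ut1 jump]] : exists u, [/\ 0 <= u, u + t <= 1 &
    forall x, u <= x <= u + t ->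
      `|x - a| <= 2 * t /\ 1 / 4 <= `|step_at a x + graphon_op w f x|].
  apply: (lipschitz_add_step_at_ge (ltW M0) _ t0 ta1 ta0).
  - by move=> x Ix; exact: WfM.
  - by move: tM; rewrite ler_pdivlMr ?mulr_gt0 //; lra.
have : (1 / 4 / (2 * t * D)) ^+ 2 * (u + t - u) <= S.
  apply: (L2_sqr_integral_ge_mul (e := fun x => degree w x - degree w a) Lf N0)
    => //; [by rewrite !mulr_gt0|by rewrite lerDl ltW| |].
  - move=> x /andP[ux xut]; have Ix : I01 x by apply: I01_itv; lra.
    apply: le_trans (dD x a Ix Ia) _.
    by rewrite [_ * D]mulrC ler_wpM2l ?(ltW D0) // (jump x _).1 // ux xut.
  - move=> x uxt Nx; have [ux xut] := andP uxt.
    by rewrite eq_ae //; [exact: (jump x uxt).2 | apply: I01_itv; lra].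
have -> : (1 / 4 / (2 * t * D)) ^+ 2 * (u + t - u) = 1 / (64 * D ^+ 2 * t).
  by field; rewrite !gt_eqF.
rewrite ler_pdivrMr ?mulr_gt0 ?exprn_gt0 //.
move: tS; rewrite ler_pdivlMr ?mulr_gt0 ?exprn_gt0 //; last lra.
have : 0 < 64 * D ^+ 2 * t by rewrite !mulr_gt0 ?exprn_gt0.
nra.
Unshelve. all: by end_near.
Qed.

Lemma deriv01_locally_constant (g : R -> R) (u v y l : R) :
  0 <= u -> u < y -> y < v -> v <= 1 ->
  (forall z, u < z < v -> g z = g y) -> deriv01 g y l -> l = 0.
Proof.
move=> u0 uy yv v1 gc gl; apply: contrapT => l0.
have l_gt0 : 0 < `|l| by rewrite normr_gt0; apply/eqP.
have := (cvgrPdist_lt _ _).1 gl _ l_gt0.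
rewrite near_withinE /= near_withinE /=.
move=> /(_ (within_filter _ _)) /nbhs_ballP[e /= e0 Be].
pose s := Num.min (e / 2) ((v - y) / 2).
have s0 : 0 < s by rewrite lt_min !divr_gt0 //; lra.
have se : s <= e / 2 by rewrite ge_min lexx.
have sv : s <= (v - y) / 2 by rewrite ge_min lexx orbT.
have ys_ball : ball y e (y + s).
  by rewrite /ball /= opprD addNKr normrN ger0_norm; lra.
have ys_neq : y + s != y by rewrite -subr_eq0 addrAC subrr add0r gt_eqF.
have ys_I01 : I01 (y + s) by apply: I01_itv; lra.
have := Be _ ys_ball ys_neq ys_I01.
by rewrite gc ?subrr ?mul0r ?subr0 ?ltxx //; apply/andP; split; lra.
Qed.

Lemma degree_not_constant_itv (w : R -> R -> R) (u v l : R) :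
  A3 w -> 0 <= u -> u < v -> v <= 1 -> exists z, u < z < v /\ degree w z <> l.
Proof.
move=> [d' [d'_deriv d'0_countable]] u0 uv v1; apply: contrapT => dl.
have dl' z : u < z < v -> degree w z = l.
  by move=> uzv; apply: contrapT => ne; apply: dl; exists z.
have crit : `]u, v[ `<=` [set x | I01 x /\ d' x = 0].
  move=> y; rewrite /= in_itv /= => /andP[uy yv].
  have Iy : I01 y by apply: I01_itv; lra.
  split => //; apply: (deriv01_locally_constant u0 uy yv v1 _ (d'_deriv y Iy)).
  by move=> z uzv; rewrite !dl' //; apply/andP; split.
have := countable_lebesgue_measure0 (sub_countable (subset_card_le crit) d'0_countable).
rewrite lebesgue_measure_itv /= lte_fin uv -EFinB => -[] /eqP.
by rewrite subr_eq0 gt_eqF.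
Qed.

Lemma degree_nearby_distinct_value (w : R -> R -> R) (x0 e : R) :
  graphon w -> A1 w -> A3 w -> I01 x0 -> 0 < e ->
  exists z, 0 < z < 1 /\ 0 < `|degree w z - degree w x0| < e.
Proof.
move=> w_graphon w_A1 w_A3 Ix0 e0.
have [D [D0 dD]] := degree_lipschitz w_graphon w_A1.
pose s := Num.min (e / (2 * D)) (1 / 2).
have s0 : 0 < s by rewrite lt_min divr_gt0 ?mulr_gt0 //=; lra.
have sDe : s * D <= e / 2.
  have : s <= e / (2 * D) by rewrite ge_min lexx.
  by rewrite ler_pdivlMr ?mulr_gt0 //; lra.
have /andP[x00 x01] := I01_bounds Ix0.
have [u [v [u0 uv v1 near_x0]]] : exists u v, [/\ 0 <= u, u < v, v <= 1 &
    forall y, u < y < v -> `|y - x0| <= s].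
  have s_half : s <= 1 / 2 by rewrite ge_min lexx orbT.
  case: (lerP x0 (1 / 2)) => hx0.
    exists x0, (x0 + s); split; try lra.
    by move=> y /andP[? ?]; rewrite ger0_norm; lra.
  exists (x0 - s), x0; split; try lra.
  by move=> y /andP[? ?]; rewrite ler0_norm; lra.
have [z [/andP[uz zv] dz]] := degree_not_constant_itv (degree w x0) w_A3 u0 uv v1.
have Iz : I01 z by apply: I01_itv; lra.
exists z; split; first by apply/andP; split; lra.
rewrite normr_gt0 subr_eq0; apply/andP; split; first exact/eqP.
apply: le_lt_trans (dD z x0 Iz Ix0) _.
have : D * `|z - x0| <= D * s by rewrite ler_wpM2l ?(ltW D0) ?near_x0 ?uz.
lra.
Qed.
End DegreeSpectrum.

Unset Implicit Arguments.

Theorem mainTheorem6 (R : realType) (w : R -> R -> R) :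
  graphon w -> robinsonian w -> A1 w -> A2 w -> A3 w -> A4 w ->
  forall l : R, fiedler w l -> ~ (exists x, I01 x /\ degree w x = l).
Proof.
move=> w_graphon _ w_A1 _ w_A3 _ l [[_ [[e [e0 resolvent_near_l]] _]] _] [x0 [Ix0 dx0]].
subst l.
have [z [z01 dz]] := degree_nearby_distinct_value w_graphon w_A1 w_A3 Ix0 e0.
by apply: (degree_not_resolvent w_graphon w_A1 z01); apply: resolvent_near_l.
Qed.
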